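(* Let $F_1,\dots,F_n:\mathbb{R}^d\to\mathbb{R}^d$, $F=\frac1n\sum_{i=1}^nF_i$, and let $x^*$ satisfy $F(x^* )=0$. Assume $F$ is $L$-Lipschitz and $\mu$-quasi strongly monotone ($\mu>0$), and that the Expected Residual condition holds with parameter $\delta>0$ for $g=F_v$, $v\sim\mathcal D$. Let $\sigma_*^2=\mathbb{E}\|F_v(x^* )\|^2<\infty$. Run SPEG with $\gamma_k=\omega_k=\omega$ for all $k$, where $0<\omega\le\min\{\frac{\mu}{18\delta},\frac{1}{4L}\}$. Then for all $k\ge0$, $$R_k^2\le\Big(1-\frac{\omega\mu}{2}\Big)^kR_0^2+\frac{24\omega\sigma_*^2}{\mu},$$ where $R_k^2:=\mathbb{E}\big[\|x_k-x^*\|^2+\|x_k-\hat x_{k-1}\|^2\big]$. Consequently, for any $\varepsilon>0$, choosing $\omega=\min\{\frac{\mu}{18\delta},\frac1{4L},\frac{\varepsilon\mu}{48\sigma_*^2}\}$, SPEG achieves $\mathbb{E}\|x_K-x^*\|^2\le\varepsilon$ after any $$K\ge\max\Big\{\frac{8L}{\mu},\frac{36\delta}{\mu^2},\frac{96\sigma_*^2}{\varepsilon\mu^2}\Big\}\log\Big(\frac{2R_0^2}{\varepsilon}\Big)$$ iterations.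
   Context: Problem: find $x^*$ with $F(x^* )=0$. $F$ is $L$-Lipschitz: $\|F(x)-F(y)\|\le L\|x-y\|$. $\mu$-quasi strongly monotone: $\langle F(x),x-x^*\rangle\ge\mu\|x-x^*\|^2$ for all $x$. A sampling distribution $\mathcal D$ is a distribution of a random vector $v\in\mathbb{R}^n_+$ with $\mathbb{E}_{\mathcal D}[v_i]=1$ for all $i$; $F_v(x):=\frac1n\sum_{i=1}^nv_iF_i(x)$. Expected Residual condition with parameter $\delta$: $\mathbb{E}\|(F_v(x)-F_v(x^* ))-(F(x)-F(x^* ))\|^2\le\frac\delta2\|x-x^*\|^2$ for all $x$. SPEG (stochastic past extragradient): given $x_0$, set $\hat x_{-1}=x_0$ and for $k\ge0$: $\hat x_k=x_k-\gamma_kF_{v_{k-1}}(\hat x_{k-1})$, $x_{k+1}=x_k-\omega_kF_{v_k}(\hat x_k)$, where $v_{-1},v_0,v_1,\dots$ are i.i.d. samples from $\mathcal D$. Expectations are over all randomness of the algorithm. *)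

From HB Require Import structures.
From mathcomp Require Import all_boot all_order all_algebra.
From mathcomp Require Import all_classical all_reals all_analysis.
Set Implicit Arguments. Unset Strict Implicit. Unset Printing Implicit Defensive.
Import Order.TTheory GRing.Theory Num.Theory.
Local Open Scope ring_scope.

Section SPEGDefs.
Variable R : realType.

Definition sqnorm {d : nat} (x : 'rV[R]_d) : R := \sum_(j < d) x 0 j ^+ 2.
Definition enorm {d : nat} (x : 'rV[R]_d) : R := Num.sqrt (sqnorm x).
Definition dotv {d : nat} (x y : 'rV[R]_d) : R := \sum_(j < d) x 0 j * y 0 j.

Definition Fbar {n d : nat} (F : 'I_n -> 'rV[R]_d -> 'rV[R]_d) (x : 'rV[R]_d)
  : 'rV[R]_d := n%:R^-1 *: \sum_(i < n) F i x.

(* F_v = (1/n) sum_i v_i F_i, where the sample vector v in R^n is w s *)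
Definition Fv {n d : nat} {V : Type} (F : 'I_n -> 'rV[R]_d -> 'rV[R]_d)
  (w : V -> 'I_n -> R) (s : V) (x : 'rV[R]_d) : 'rV[R]_d :=
  n%:R^-1 *: \sum_(i < n) w s i *: F i x.

(* One run of SPEG with constant step sizes gamma, omega.
   speg_run x xh vprev l: current iterate x = x_k, xh = \hat x_{k-1},
   vprev = v_{k-1}, and l = [v_k; v_{k+1}; ...] the remaining samples.
   Returns the pair (x_{k+m}, \hat x_{k+m-1}) where m = size l. *)
Fixpoint speg_run {n d : nat} {V : Type} (F : 'I_n -> 'rV[R]_d -> 'rV[R]_d)
  (w : V -> 'I_n -> R) (gamma omega : R)
  (x xh : 'rV[R]_d) (vprev : V) (l : seq V) : 'rV[R]_d * 'rV[R]_d :=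
  match l with
  | [::] => (x, xh)
  | v :: l' =>
      let xh' := x - gamma *: Fv F w vprev xh in
      speg_run F w gamma omega (x - omega *: Fv F w v xh') xh' v l'
  end.

(* Given the sample sequence s = [v_{-1}; v_0; ...; v_{k-1}] (size k+1),
   speg_iter returns (x_k, \hat x_{k-1}); x_0 given, \hat x_{-1} = x_0. *)
Definition speg_iter {n d : nat} {V : Type} (F : 'I_n -> 'rV[R]_d -> 'rV[R]_d)
  (w : V -> 'I_n -> R) (gamma omega : R) (x0 : 'rV[R]_d) (s : seq V)
  : 'rV[R]_d * 'rV[R]_d :=
  match s with
  | [::] => (x0, x0)
  | v :: l => speg_run F w gamma omega x0 x0 v l
  end.

(* Expectation of a function of m i.i.d. samples from D:
   the integral with respect to the m-fold product law D^{(x) m},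
   written as iterated integrals. *)
Fixpoint Eiid {dV : measure_display} {V : measurableType dV}
  (D : probability V R) (m : nat) (g : seq V -> \bar R) : \bar R :=
  match m with
  | 0 => g [::]
  | m'.+1 => (\int[D]_v Eiid D m' (fun s => g (v :: s)))%E
  end.

Definition SPEG_R2 {n d : nat} {dV : measure_display} {V : measurableType dV}
  (D : probability V R) (F : 'I_n -> 'rV[R]_d -> 'rV[R]_d)
  (w : V -> 'I_n -> R) (gamma omega : R) (x0 xs : 'rV[R]_d) (k : nat)
  : \bar R :=
  Eiid D k.+1 (fun s => let p := speg_iter F w gamma omega x0 s in
                 (sqnorm (p.1 - xs) + sqnorm (p.1 - p.2))%:E).

Definition SPEG_dist2 {n d : nat} {dV : measure_display} {V : measurableType dV}
  (D : probability V R) (F : 'I_n -> 'rV[R]_d -> 'rV[R]_d)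
  (w : V -> 'I_n -> R) (gamma omega : R) (x0 xs : 'rV[R]_d) (k : nat)
  : \bar R :=
  Eiid D k.+1 (fun s => (sqnorm ((speg_iter F w gamma omega x0 s).1 - xs))%:E).

End SPEGDefs.

From HB Require Import structures.
From mathcomp Require Import all_boot all_order all_algebra.
From mathcomp Require Import all_classical all_reals all_analysis.
From mathcomp Require Import ring lra measurable_realfun.
Import Order.TTheory GRing.Theory Num.Theory.
Set Implicit Arguments. Unset Strict Implicit. Unset Printing Implicit Defensive.
Local Open Scope ring_scope.

(* With Phi_k := |x_k - x*|^2 + |x_k - xh_{k-1}|^2, expand
   Phi_{k+1} around the mean F(xh_k) of the fresh sample F_{v_k}(xh_k), which is
   unbiased because E v = 1.  Quasi-strong monotonicity at xh_k, the Lipschitz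
   bound on F and the variance bound
   E|F_v(y) - F(y)|^2 <= delta |y - x*|^2 + 2 sigma^2
   (from the expected residual condition) give, after integrating out v_k and
   v_{k-1},  E Phi_{k+1} <= (1 - om mu / 2) E Phi_k + 12 om^2 sigma^2,  whose
   fixed point is 24 om sigma^2 / mu.  Conditioning on the past is literal:
   [Eiid] integrates the samples one at a time, so the last two samples are
   integrated innermost.  For the complexity bound, the step size makes
   24 om sigma^2 / mu <= eps / 2, and (1 - t)^K <= exp (- t K) with
   t = om mu / 2 makes the contracted term <= eps / 2. *)

Section NonnegIntegral.
Local Open Scope ereal_scope.
Context (R : realType) (dV : measure_display) (V : measurableType dV)
  (P : probability V R).
Import HBNNSimple.

(* No measurability is needed: the integral of a nonnegative function is the
   supremum over its simple minorants.  This matters because the iterated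
   expectations [Eiid] integrate functions that are never shown measurable. *)
Lemma le_ge0_integral (f g : V -> \bar R) :
  (forall v, 0 <= f v) -> (forall v, f v <= g v) ->
  \int[P]_v f v <= \int[P]_v g v.
Proof.
move=> f0 fg; have g0 v : 0 <= g v by exact: le_trans (f0 v) (fg v).
rewrite !ge0_integralTE //; apply: ge_ereal_sup => _ [h hf <-].
by apply: ereal_sup_ubound; exists h => //= v; exact: le_trans (hf v) (fg v).
Qed.

Lemma integral_cst_probability (c : \bar R) : \int[P]_v c = c.
Proof.
rewrite (integral_cst P measurableT) -[RHS]mule1.
by congr (_ * _); exact: probability_setT.
Qed.

Lemma integral_addr_cst (f : V -> R) (c : R) : measurable_fun setT f ->
  (forall v, 0 <= f v)%R -> (forall v, 0 <= f v + c)%R ->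
  \int[P]_v (f v + c)%:E = \int[P]_v (f v)%:E + c%:E.
Proof.
move=> mf f0 fc0.
have mfE : measurable_fun setT (fun v => (f v)%:E) by exact/measurable_EFinP.
have [c0|c0] := leP 0%R c.
  under eq_integral do rewrite EFinD.
  rewrite ge0_integralD // ?integral_cst_probability // => v _; exact: f0.
have mfc : measurable_fun setT (fun v => (f v + c)%:E).
  by apply/measurable_EFinP/measurable_funD => //; exact: measurable_cst.
transitivity (\int[P]_v ((f v + c)%:E + (- c)%:E) + c%:E).
  by rewrite ge0_integralD ?integral_cst_probability -?addeA -?EFinD ?addNr
    ?adde0 // => v _; rewrite lee_fin ?oppr_ge0 ?fc0 // ltW.
by congr (_ + _); apply: eq_integral => v _; rewrite -EFinD addrK.
Qed.

(* The simple minorant [h] of [f1] is dominated by [a * k + c] with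
   [k := max (h - c) 0 / a <= f2]. *)
Lemma le_ge0_integral_affine (f1 f2 : V -> \bar R) (a c : R) :
  (0 <= a)%R -> (0 <= c)%R ->
  (forall v, 0 <= f1 v) -> (forall v, 0 <= f2 v) ->
  (forall v, f1 v <= a%:E * f2 v + c%:E) ->
  \int[P]_v f1 v <= a%:E * \int[P]_v f2 v + c%:E.
Proof.
move=> a0 c0 f10 f20 f12; rewrite ge0_integralTE //.
apply: ge_ereal_sup => _ [h hf1 <-] /=.
have := integral_nnsfun P measurableT h; rewrite patch_setT => <-.
have h0 v : (0 <= h v)%R by exact: fun_ge0.
have mh : measurable_fun setT (fun v => (h v)%:E).
  exact/measurable_EFinP/measurable_funPT.
have [a_eq0|a_neq0] := eqVneq a 0%R.
  subst a; rewrite mul0e add0e -[leRHS](integral_cst_probability c%:E).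
  apply: ge0_le_integral => // [v _|v _]; first by rewrite lee_fin.
  by have := le_trans (hf1 v) (f12 v); rewrite mul0e add0e.
have a_gt0 : (0 < a)%R by rewrite lt_def a_neq0.
pose k v := (Num.max (h v - c) 0 / a)%R.
have k0 v : (0 <= k v)%R by rewrite divr_ge0 // le_max lexx orbT.
have mk : measurable_fun setT (fun v => (k v)%:E).
  apply/measurable_EFinP/measurable_funM; last exact: measurable_cst.
  apply: measurable_maxr; last exact: measurable_cst.
  by apply: measurable_funB => //; exact: measurable_funPT.
have k_le v : (k v)%:E <= f2 v.
  have := f12 v; have := f20 v; case: (f2 v) => [r| |] //= r0 f12v; last first.
    by rewrite leey.
  rewrite lee_fin ler_pdivrMr // mulrC ge_max; apply/andP; split.
    by rewrite lerBlDr -lee_fin EFinD EFinM (le_trans (hf1 v)).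
  by rewrite mulr_ge0 // -lee_fin.
apply: (@le_trans _ _ (\int[P]_v (a%:E * (k v)%:E + c%:E))).
  apply: ge0_le_integral => // [v _||v _]; first by rewrite lee_fin.
    by apply: emeasurable_funD; [exact: measurable_funeM | exact: measurable_cst].
  rewrite -EFinM -EFinD lee_fin /k mulrCA divff ?mulr1 //.
  by rewrite -lerBlDr le_max lexx.
rewrite ge0_integralD //; last 2 first.
- by move=> v _; rewrite -EFinM lee_fin mulr_ge0.
- exact: measurable_funeM.
rewrite integral_cst_probability ge0_integralZl_EFin // => [|v _]; last first.
  by rewrite lee_fin.
by rewrite leeD2r // lee_wpmul2l ?lee_fin // le_ge0_integral // => v;
  rewrite lee_fin.
Qed.

End NonnegIntegral.

Section IIDExpectation.
Local Open Scope ereal_scope.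
Context (R : realType) (dV : measure_display) (V : measurableType dV)
  (P : probability V R).

Lemma Eiid_ge0 m (g : seq V -> \bar R) :
  (forall s, 0 <= g s) -> 0 <= Eiid P m g.
Proof.
elim: m g => [|m IH] g g0 /=; first exact: g0.
by apply: integral_ge0 => v _; exact: IH.
Qed.

Lemma eq_Eiid m (f g : seq V -> \bar R) :
  (forall s, f s = g s) -> Eiid P m f = Eiid P m g.
Proof.
elim: m f g => [|m IH] f g fg /=; first exact: fg.
by apply: eq_integral => v _; exact: IH.
Qed.

Lemma Eiid_cst m (c : \bar R) : Eiid P m (fun _ => c) = c.
Proof.
elim: m => [|m IH] //=.
by under eq_integral do rewrite IH; rewrite integral_cst_probability.
Qed.

Lemma EiidD m k (g : seq V -> \bar R) :
  Eiid P (m + k) g = Eiid P m (fun p => Eiid P k (fun t => g (p ++ t))).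
Proof.
elim: m g => [|m IH] g //=.
by apply: eq_integral => v _; rewrite IH.
Qed.

Lemma le_Eiid_affine m (f g : seq V -> \bar R) (a c : R) :
  (0 <= a)%R -> (0 <= c)%R -> (forall s, 0 <= f s) -> (forall s, 0 <= g s) ->
  (forall s, size s = m -> f s <= a%:E * g s + c%:E) ->
  Eiid P m f <= a%:E * Eiid P m g + c%:E.
Proof.
move=> a0 c0; elim: m f g => [|m IH] f g f0 g0 fg /=; first exact: fg.
apply: le_ge0_integral_affine => // [v|v|v]; try exact: Eiid_ge0.
by apply: IH => // s sz; apply: fg; rewrite /= sz.
Qed.

End IIDExpectation.

Ltac by_coordinates := rewrite /sqnorm /dotv ?mulr_sumr -?sumrN -?big_split /=;
  apply: eq_bigr => j _; rewrite !mxE; ring.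
Ltac by_entries := apply/rowP => j; rewrite !mxE; ring.

Section Euclidean.
Context (R : realType) (d : nat).
Implicit Types x y : 'rV[R]_d.

Lemma sqnorm_ge0 x : 0 <= sqnorm x.
Proof. by apply: sumr_ge0 => j _; exact: sqr_ge0. Qed.

Lemma sqnorm0 : sqnorm (0 : 'rV[R]_d) = 0.
Proof. by rewrite /sqnorm big1 // => j _; rewrite mxE expr0n. Qed.

Lemma sqnormBC x y : sqnorm (x - y) = sqnorm (y - x).
Proof. by by_coordinates. Qed.

Lemma sqnormZ (k : R) x : sqnorm (k *: x) = k ^+ 2 * sqnorm x.
Proof. by by_coordinates. Qed.

Lemma sqnormD_le x y : sqnorm (x + y) <= 2 * sqnorm x + 2 * sqnorm y.
Proof.
rewrite /sqnorm !mulr_sumr -big_split /=; apply: ler_sum => j _; rewrite mxE.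
by have := sqr_ge0 (x 0 j - y 0 j); nra.
Qed.

Lemma dotv_suml n (f : 'I_n -> 'rV[R]_d) y :
  dotv (\sum_(i < n) f i) y = \sum_(i < n) dotv (f i) y.
Proof.
rewrite /dotv; under eq_bigr do rewrite summxE mulr_suml.
by rewrite exchange_big.
Qed.

Lemma dotvZl (k : R) x y : dotv (k *: x) y = k * dotv x y.
Proof. by rewrite /dotv mulr_sumr; apply: eq_bigr => j _; rewrite mxE mulrA. Qed.

Lemma enorm_sqr x : enorm x ^+ 2 = sqnorm x.
Proof. by rewrite sqr_sqrtr // sqnorm_ge0. Qed.

Lemma sqnorm_le_of_enorm_le (L : R) x y : 0 <= L -> enorm x <= L * enorm y ->
  sqnorm x <= L ^+ 2 * sqnorm y.
Proof.
move=> L0 xy; rewrite -!enorm_sqr -exprMn.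
by apply: lerXn2r; rewrite // nnegrE ?mulr_ge0 // sqrtr_ge0.
Qed.

(* Test both hypotheses at [x* + e] for a unit coordinate vector [e]. *)
Lemma quasi_strongly_monotone_le_lipschitz (G : 'rV[R]_d -> 'rV[R]_d)
    (xs : 'rV[R]_d) (L mu : R) :
  (0 < d)%N -> G xs = 0 ->
  (forall x y, enorm (G x - G y) <= L * enorm (x - y)) ->
  (forall x, mu * sqnorm (x - xs) <= dotv (G x) (x - xs)) -> mu <= L.
Proof.
move=> d_gt0 Gxs lipG qsmG; pose j0 := Ordinal d_gt0.
pose e : 'rV[R]_d := delta_mx 0 j0.
have xseE : xs + e - xs = e by rewrite addrAC subrr add0r.
have e_sqnorm : sqnorm e = 1.
  rewrite /sqnorm (bigD1 j0) //= big1 ?addr0 => [|j /negbTE j_neq].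
    by rewrite mxE !eqxx expr1n.
  by rewrite mxE j_neq andbF expr0n.
have dotv_e y : dotv y e = y 0 j0.
  rewrite /dotv (bigD1 j0) //= big1 ?addr0 => [|j /negbTE j_neq].
    by rewrite mxE !eqxx mulr1.
  by rewrite mxE j_neq andbF mulr0.
have coord_le y : y 0 j0 <= enorm y.
  rewrite (le_trans (ler_norm _)) // -sqrtr_sqr ler_wsqrtr //.
  by rewrite /sqnorm (bigD1 j0) //= lerDl sumr_ge0 // => j _; exact: sqr_ge0.
have := qsmG (xs + e); rewrite xseE e_sqnorm mulr1 dotv_e => /le_trans; apply.
apply: le_trans (coord_le _) _.
by have := lipG (xs + e) xs; rewrite Gxs subr0 xseE /enorm e_sqnorm sqrtr1 mulr1.
Qed.

End Euclidean.

Section RandomVector.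
Context (R : realType) (d : nat) (dV : measure_display) (V : measurableType dV).
Implicit Types f g : V -> 'rV[R]_d.

Definition measurable_rV f := forall j, measurable_fun setT (fun s => f s 0 j).

Lemma measurable_rV_cst (c : 'rV[R]_d) : measurable_rV (fun _ => c).
Proof. by move=> j; exact: measurable_cst. Qed.

Lemma measurable_rVD f g : measurable_rV f -> measurable_rV g ->
  measurable_rV (fun s => f s + g s).
Proof.
move=> mf mg j; under eq_fun do rewrite mxE.
exact: measurable_funD.
Qed.

Lemma measurable_rVB f g : measurable_rV f -> measurable_rV g ->
  measurable_rV (fun s => f s - g s).
Proof.
move=> mf mg j; under eq_fun do rewrite !mxE.
by apply: measurable_funB => //; exact: mg.
Qed.

Lemma measurable_rVZ (k : R) f : measurable_rV f ->
  measurable_rV (fun s => k *: f s).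
Proof.
move=> mf j; under eq_fun do rewrite mxE.
by apply: measurable_funM => //; exact: measurable_cst.
Qed.

Lemma measurable_sqnorm f : measurable_rV f ->
  measurable_fun setT (fun s => sqnorm (f s)).
Proof. by move=> mf; apply: measurable_sum => j; exact: measurable_funX. Qed.

Lemma measurable_EFin_sqnorm f : measurable_rV f ->
  measurable_fun setT (fun s => (sqnorm (f s))%:E).
Proof. by move=> mf; apply/measurable_EFinP; exact: measurable_sqnorm. Qed.

End RandomVector.

#[export] Hint Resolve measurable_rV_cst measurable_rVD measurable_rVB
  measurable_rVZ measurable_EFin_sqnorm : core.

Section Unbiased.
Local Open Scope ereal_scope.
Context (R : realType) (n d : nat) (dV : measure_display) (V : measurableType dV)
  (P : probability V R) (w : V -> 'I_n -> R) (F : 'I_n -> 'rV[R]_d -> 'rV[R]_d).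
Hypotheses (w_meas : forall i, measurable_fun setT (fun s => w s i))
  (w_ge0 : forall s i, (0 <= w s i)%R)
  (w_mean : forall i, \int[P]_s (w s i)%:E = 1).

Lemma measurable_rV_Fv x : measurable_rV (fun s => Fv F w s x).
Proof.
move=> j; under eq_fun do rewrite mxE summxE.
under eq_fun do under eq_bigr do rewrite mxE.
apply: measurable_funM; first exact: measurable_cst.
apply: measurable_sum => i.
by apply: measurable_funM => //; exact: measurable_cst.
Qed.

Lemma integrable_weight i : P.-integrable setT (fun s => (w s i)%:E).
Proof.
apply/integrableP; split; first exact/measurable_EFinP.
by under eq_integral do rewrite gee0_abs ?lee_fin //; rewrite w_mean ltry.
Qed.

Lemma dotv_Fv s x y :
  dotv (Fv F w s x) y = (\sum_(i < n) w s i * (n%:R^-1 * dotv (F i x) y))%R.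
Proof.
rewrite dotvZl dotv_suml mulr_sumr; apply: eq_bigr => i _.
by rewrite dotvZl mulrCA.
Qed.

Lemma integrable_dotv_Fv x y :
  P.-integrable setT (fun s => (dotv (Fv F w s x) y)%:E).
Proof.
under eq_fun do rewrite dotv_Fv -sumEFin.
apply: (integrable_sum measurableT) => i _; under eq_fun do rewrite EFinM.
exact: (integrableZr measurableT _ (integrable_weight i)).
Qed.

Lemma integral_dotv_Fv x y :
  \int[P]_s (dotv (Fv F w s x) y)%:E = (dotv (Fbar F x) y)%:E.
Proof.
under eq_integral do rewrite dotv_Fv -sumEFin.
rewrite (integral_sum measurableT) => [|i]; last first.
  under eq_fun do rewrite EFinM.
  exact: (integrableZr measurableT _ (integrable_weight i)).
under eq_bigr do under eq_integral do rewrite EFinM.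
under eq_bigr do
  rewrite (integralZr measurableT (integrable_weight _)) w_mean mul1e.
by rewrite sumEFin dotvZl dotv_suml mulr_sumr.
Qed.

End Unbiased.

#[export] Hint Resolve measurable_rV_Fv : core.

Section Descent.
Context (R : realType) (d : nat).
Implicit Types X G g m xs : 'rV[R]_d.

(* With [x_{k+1} = X - om g] and [xh_k = X - om G], the Lyapunov function is
   affine in [g] up to [2 om^2 |g - m|^2]; [m] will be the mean of [g]. *)
Lemma lyapunov_step_expand X G g m xs (om : R) :
  sqnorm (X - om *: g - xs) + sqnorm (X - om *: g - (X - om *: G)) =
  (sqnorm (X - xs) + 2 * om ^+ 2 * sqnorm (m - G) - om ^+ 2 * sqnorm G
   - 4 * om ^+ 2 * dotv m (m - G))
  + dotv g (- (2 * om) *: ((X - om *: G) - xs) + (4 * om ^+ 2) *: (m - G))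
  + 2 * om ^+ 2 * sqnorm (g - m).
Proof. by by_coordinates. Qed.

Lemma lyapunov_step_mean X G m xs (om : R) :
  (sqnorm (X - xs) + 2 * om ^+ 2 * sqnorm (m - G) - om ^+ 2 * sqnorm G
   - 4 * om ^+ 2 * dotv m (m - G))
  + dotv m (- (2 * om) *: ((X - om *: G) - xs) + (4 * om ^+ 2) *: (m - G)) =
  sqnorm (X - xs) - 2 * om * dotv m ((X - om *: G) - xs)
  + 2 * om ^+ 2 * sqnorm (m - G) - om ^+ 2 * sqnorm G.
Proof. by by_coordinates. Qed.

End Descent.

(* With [xh = X - om G] and the previous
   extrapolation point [h]:  A = |X - x*|^2,  B = |X - h|^2,  Y = |xh - x*|^2,
   Z = |xh - h|^2,  S = om^2 |G|^2,  H = |h - x*|^2,  N = |G - F h|^2,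
   M = |F xh - G|^2,  Dt = <F xh, xh - x*>. *)
Lemma speg_descent_real (R : realType)
    (om mu delta L sigma2 A B Y Z S H N M Dt : R) :
  0 < om -> 0 < mu -> 0 <= delta -> 0 < L ->
  om * delta <= mu / 18 -> om * L <= 1 / 4 -> om * mu <= 1 / 4 ->
  0 <= A -> 0 <= B -> 0 <= Y -> 0 <= Z -> 0 <= S -> 0 <= H -> 0 <= N ->
  H <= 2 * Y + 2 * Z -> Z <= 2 * B + 2 * S -> A <= 2 * Y + 2 * S ->
  mu * Y <= Dt -> M <= 2 * L ^+ 2 * Z + 2 * N ->
  A - 2 * om * Dt + 2 * om ^+ 2 * M - S + 2 * om ^+ 2 * (delta * Y + 2 * sigma2)
  <= (1 - om * mu / 2) * (A + B) + 4 * om ^+ 2 * N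
     + (4 * om ^+ 2 * sigma2 - 4 * om ^+ 2 * delta * H).
Proof.
move=> om0 mu0 de0 L0 hq hr hp A0 B0 Y0 Z0 S0 H0 N0 hH hZ hA hD hM.
set p := om * mu; set q := om * (om * delta); set r := (om * L) ^+ 2.
have p_le : p <= 1 / 4 := hp.
have p0 : 0 <= p by rewrite mulr_ge0 // ltW.
have q0 : 0 <= q by rewrite !mulr_ge0 // ltW.
have qp : q <= p / 18 by have := ler_wpM2l (ltW om0) hq; rewrite /q /p; lra.
have r16 : r <= 1 / 16.
  have omL0 : 0 <= om * L by rewrite mulr_ge0 // ltW.
  by rewrite /r expr2; nra.
have h1 : 0 <= om * (Dt - mu * Y) by rewrite mulr_ge0 ?subr_ge0 // ltW.
have h2 : 0 <= om ^+ 2 * (2 * L ^+ 2 * Z + 2 * N - M).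
  by rewrite mulr_ge0 ?subr_ge0 // sqr_ge0.
have h3 : 0 <= q * (2 * Y + 2 * Z - H) by rewrite mulr_ge0 ?subr_ge0.
have h4 : 0 <= (p - 10 * q) * Y by rewrite mulr_ge0 // subr_ge0; lra.
have h5 : 0 <= p * (2 * Y + 2 * S - A) by rewrite mulr_ge0 ?subr_ge0.
have h6 : 0 <= (4 * r + 8 * q) * (2 * B + 2 * S - Z).
  by rewrite mulr_ge0 ?subr_ge0 // addr_ge0 // mulr_ge0 // /r sqr_ge0.
have h7 : 0 <= (1 - p / 2 - 8 * r - 16 * q) * B.
  by rewrite mulr_ge0 //; move: p_le qp r16; clearbody p q r; lra.
have h8 : 0 <= (1 - p - 8 * r - 16 * q) * S.
  by rewrite mulr_ge0 //; move: p_le qp r16; clearbody p q r; lra.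
(* The goal is a nonnegative combination of [h1], ..., [h8]. *)
by move: h1 h2 h3 h4 h5 h6 h7 h8; rewrite /p /q /r; nra.
Qed.

Section SPEGState.
Context (R : realType) (n d : nat) (V : Type) (F : 'I_n -> 'rV[R]_d -> 'rV[R]_d)
  (w : V -> 'I_n -> R) (ga om : R).

(* [(x_k, xh_{k-1}, v_{k-1})] after consuming the samples [l]. *)
Fixpoint speg_state (x xh : 'rV[R]_d) (vp : V) (l : seq V) :
    'rV[R]_d * 'rV[R]_d * V :=
  if l is v :: l' then
    let xh' := x - ga *: Fv F w vp xh in
    speg_state (x - om *: Fv F w v xh') xh' v l'
  else (x, xh, vp).

Lemma speg_run_cat x xh vp l t :
  speg_run F w ga om x xh vp (l ++ t) =
  let: (x', xh', vp') := speg_state x xh vp l in speg_run F w ga om x' xh' vp' t.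
Proof. by elim: l x xh vp => [|v l IH] x xh vp //=; rewrite IH. Qed.

End SPEGState.

Section SPEGLyapunov.
Local Open Scope ereal_scope.
Context (R : realType) (n d : nat) (dV : measure_display) (V : measurableType dV)
  (P : probability V R) (w : V -> 'I_n -> R) (F : 'I_n -> 'rV[R]_d -> 'rV[R]_d).
Context (xs x0 : 'rV[R]_d) (delta sigma2 : R).
Hypotheses (w_meas : forall i, measurable_fun setT (fun s => w s i))
  (w_ge0 : forall s i, (0 <= w s i)%R)
  (w_mean : forall i, \int[P]_s (w s i)%:E = 1)
  (Fxs : (Fbar F xs = 0)%R)
  (residual : forall x, \int[P]_s (sqnorm ((Fv F w s x - Fv F w s xs)
                                   - (Fbar F x - Fbar F xs)))%:E
                        <= (delta / 2 * sqnorm (x - xs))%:E)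
  (sigma2E : \int[P]_s (sqnorm (Fv F w s xs))%:E = sigma2%:E).

Lemma sigma2_ge0 : (0 <= sigma2)%R.
Proof.
rewrite -lee_fin -sigma2E.
by apply: integral_ge0 => s _; rewrite lee_fin sqnorm_ge0.
Qed.

Lemma variance_Fv_le y :
  \int[P]_s (sqnorm (Fv F w s y - Fbar F y))%:E
  <= (delta * sqnorm (y - xs) + 2 * sigma2)%:E.
Proof.
pose A s := ((Fv F w s y - Fv F w s xs) - (Fbar F y - Fbar F xs))%R.
have AE s : (Fv F w s y - Fbar F y = A s + Fv F w s xs)%R.
  by rewrite /A Fxs subr0 addrAC subrK.
have mA : measurable_rV A by rewrite /A; auto.
have mEA (k : R) : measurable_fun setT (fun s => (k * sqnorm (A s))%:E).
  by apply/measurable_EFinP/measurable_funM => //; apply: measurable_sqnorm; auto.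
have mEF (k : R) : measurable_fun setT (fun s => (k * sqnorm (Fv F w s xs))%:E).
  by apply/measurable_EFinP/measurable_funM => //; apply: measurable_sqnorm; auto.
under eq_integral do rewrite AE.
apply: (@le_trans _ _ (\int[P]_s ((2 * sqnorm (A s))%:E
                                  + (2 * sqnorm (Fv F w s xs))%:E))).
  apply: ge0_le_integral => // [s _|||s _].
  - by rewrite lee_fin sqnorm_ge0.
  - by auto.
  - exact: emeasurable_funD.
  - by rewrite -EFinD lee_fin sqnormD_le.
rewrite ge0_integralD // => [|s _|s _]; last 2 first.
- by rewrite lee_fin mulr_ge0 ?sqnorm_ge0.
- by rewrite lee_fin mulr_ge0 ?sqnorm_ge0.
under eq_integral do rewrite EFinM.
under [X in _ + X]eq_integral do rewrite EFinM.
rewrite !ge0_integralZl_EFin //; last 4 first.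
- by move=> s _; rewrite lee_fin sqnorm_ge0.
- by auto.
- by move=> s _; rewrite lee_fin sqnorm_ge0.
- by auto.
rewrite sigma2E -EFinM.
apply: (@le_trans _ _ (2%:E * (delta / 2 * sqnorm (y - xs))%:E + (2 * sigma2)%:E)).
  by rewrite leeD2r // lee_pmul2l ?lte_fin //; exact: residual.
by rewrite -EFinM -EFinD lee_fin; lra.
Qed.

Lemma integrable_variance_Fv y :
  P.-integrable setT (fun s => (sqnorm (Fv F w s y - Fbar F y))%:E).
Proof.
apply/integrableP; split; first by auto.
under eq_integral do rewrite gee0_abs ?lee_fin ?sqnorm_ge0 //.
exact: le_lt_trans (variance_Fv_le y) (ltry _).
Qed.

Lemma lyapunov_one_sample_le (X G : 'rV[R]_d) (om : R) :
  \int[P]_s (sqnorm (X - om *: Fv F w s (X - om *: G) - xs)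
             + sqnorm (X - om *: Fv F w s (X - om *: G) - (X - om *: G)))%:E
  <= (sqnorm (X - xs)
      - 2 * om * dotv (Fbar F (X - om *: G)) ((X - om *: G) - xs)
      + 2 * om ^+ 2 * sqnorm (Fbar F (X - om *: G) - G) - om ^+ 2 * sqnorm G
      + 2 * om ^+ 2 * (delta * sqnorm ((X - om *: G) - xs) + 2 * sigma2))%:E.
Proof.
set xh := (X - om *: G)%R; set m := Fbar F xh.
set K := (sqnorm (X - xs) + 2 * om ^+ 2 * sqnorm (m - G) - om ^+ 2 * sqnorm G
          - 4 * om ^+ 2 * dotv m (m - G))%R.
set u := (- (2 * om) *: (xh - xs) + (4 * om ^+ 2) *: (m - G))%R.
have splitE (a b k c : R) : (a + b + k * c)%:E = a%:E + (b%:E + k%:E * c%:E).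
  by rewrite !EFinD EFinM addeA.
under eq_integral do rewrite (lyapunov_step_expand X G _ m) -/xh -/K -/u splitE.
have int_var :=
  integrableZl measurableT (2 * om ^+ 2)%R (integrable_variance_Fv xh).
rewrite integralD //; last 2 first.
- exact: finite_measure_integrable_cst.
- by apply: (integrableD measurableT) int_var; exact: integrable_dotv_Fv.
rewrite integralD ?integral_cst_probability //; last exact: integrable_dotv_Fv.
rewrite integral_dotv_Fv // (integralZl measurableT (integrable_variance_Fv xh)).
rewrite addeA -EFinD lyapunov_step_mean [leRHS]EFinD leeD2l // [leRHS]EFinM.
apply: lee_wpmul2l; last exact: variance_Fv_le.
by rewrite lee_fin mulr_ge0 // sqr_ge0.
Qed.

Context (mu L om : R).
Hypotheses (mu_gt0 : (0 < mu)%R) (L_gt0 : (0 < L)%R) (delta_ge0 : (0 <= delta)%R)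
  (F_lipschitz : forall x y, (enorm (Fbar F x - Fbar F y) <= L * enorm (x - y))%R)
  (F_qsm : forall x, (mu * sqnorm (x - xs) <= dotv (Fbar F x) (x - xs))%R)
  (om_gt0 : (0 < om)%R) (om_delta : (om * delta <= mu / 18)%R)
  (om_L : (om * L <= 1 / 4)%R) (om_mu : (om * mu <= 1 / 4)%R).

Let rho := (1 - om * mu / 2)%R.

Lemma rho_ge0 : (0 <= rho)%R.
Proof. by move: om_mu; rewrite /rho; lra. Qed.

Lemma lyapunov_step_le (X G h : 'rV[R]_d) :
  \int[P]_s (sqnorm (X - om *: Fv F w s (X - om *: G) - xs)
             + sqnorm (X - om *: Fv F w s (X - om *: G) - (X - om *: G)))%:E
  <= (rho * (sqnorm (X - xs) + sqnorm (X - h))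
      + 4 * om ^+ 2 * sqnorm (G - Fbar F h)
      + (4 * om ^+ 2 * sigma2 - 4 * om ^+ 2 * delta * sqnorm (h - xs)))%:E.
Proof.
apply: le_trans (lyapunov_one_sample_le X G om) _; rewrite lee_fin.
set xh := (X - om *: G)%R.
apply: (@speg_descent_real R om mu delta L sigma2 _ _ _ (sqnorm (xh - h)));
  rewrite ?sqnorm_ge0 ?mulr_ge0 ?sqr_ge0 ?sqnorm_ge0 ?(ltW om_gt0) //.
- have -> : (h - xs = (xh - xs) + (h - xh))%R by by_entries.
  by rewrite (sqnormBC xh h) sqnormD_le.
- have -> : (xh - h = (X - h) + (- om) *: G)%R by rewrite /xh; by_entries.
  by apply: le_trans (sqnormD_le _ _) _; rewrite sqnormZ sqrrN.
- have -> : (X - xs = (xh - xs) + om *: G)%R by rewrite /xh; by_entries.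
  by apply: le_trans (sqnormD_le _ _) _; rewrite sqnormZ.
- have -> : (Fbar F xh - G = (Fbar F xh - Fbar F h) + (Fbar F h - G))%R.
    by by_entries.
  apply: le_trans (sqnormD_le _ _) _; rewrite (sqnormBC (Fbar F h) G).
  rewrite lerD2r -mulrA ler_wpM2l //.
  by apply: sqnorm_le_of_enorm_le; [exact: ltW | exact: F_lipschitz].
Qed.

Lemma lyapunov_two_samples_le (h : 'rV[R]_d) (X : V -> 'rV[R]_d) :
  measurable_rV X ->
  \int[P]_a \int[P]_b
     (sqnorm (X a - om *: Fv F w b (X a - om *: Fv F w a h) - xs)
      + sqnorm (X a - om *: Fv F w b (X a - om *: Fv F w a h)
                - (X a - om *: Fv F w a h)))%:E
  <= rho%:E * \int[P]_a (sqnorm (X a - xs) + sqnorm (X a - h))%:E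
     + (12 * om ^+ 2 * sigma2)%:E.
Proof.
move=> mX.
pose lyap a := (sqnorm (X a - xs) + sqnorm (X a - h))%R.
pose var a := sqnorm (Fv F w a h - Fbar F h).
pose c0 := (4 * om ^+ 2 * sigma2 - 4 * om ^+ 2 * delta * sqnorm (h - xs))%R.
have lyap_ge0 a : (0 <= lyap a)%R by rewrite addr_ge0 ?sqnorm_ge0.
have var_ge0 a : (0 <= var a)%R by exact: sqnorm_ge0.
have om2_ge0 : (0 <= 4 * om ^+ 2)%R by rewrite mulr_ge0 ?sqr_ge0.
have m_lyap : measurable_fun setT lyap.
  by apply: measurable_funD; apply: measurable_sqnorm; auto.
have m_var : measurable_fun setT var by apply: measurable_sqnorm; auto.
set inner := (fun a => \int[P]_b _).
have inner_ge0 a : 0 <= inner a.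
  by apply: integral_ge0 => b _; rewrite lee_fin addr_ge0 ?sqnorm_ge0.
have inner_le a : inner a <= (rho * lyap a + 4 * om ^+ 2 * var a + c0)%:E.
  exact: lyapunov_step_le.
apply: le_trans (le_ge0_integral P inner_ge0 inner_le) _.
(* [c0] may be negative, hence [integral_addr_cst] rather than linearity. *)
rewrite integral_addr_cst; first last.
- by move=> a; rewrite -lee_fin (le_trans (inner_ge0 a)).
- by move=> a; rewrite addr_ge0 // mulr_ge0 // rho_ge0.
- by apply: measurable_funD; apply: measurable_funM => //; exact: measurable_cst.
under eq_integral do rewrite EFinD !EFinM.
rewrite ge0_integralD //; last 4 first.
- by move=> a _; rewrite lee_fin mulr_ge0 ?rho_ge0.
- by apply: measurable_funeM; exact/measurable_EFinP.
- by move=> a _; rewrite lee_fin mulr_ge0 ?sqnorm_ge0.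
- by apply: measurable_funeM; exact/measurable_EFinP.
rewrite !ge0_integralZl_EFin ?rho_ge0 //; last 4 first.
- by move=> a _; rewrite lee_fin sqnorm_ge0.
- exact/measurable_EFinP.
- by move=> a _; rewrite lee_fin.
- exact/measurable_EFinP.
rewrite -addeA leeD2l //.
apply: (@le_trans _ _ ((4 * om ^+ 2)%:E * (delta * sqnorm (h - xs) + 2 * sigma2)%:E
                       + c0%:E)).
  by rewrite leeD2r // lee_wpmul2l ?lee_fin // variance_Fv_le.
by rewrite -EFinM -EFinD lee_fin /c0; lra.
Qed.

Let lyapunov (s : seq V) : \bar R :=
  let p := speg_iter F w om om x0 s in (sqnorm (p.1 - xs) + sqnorm (p.1 - p.2))%:E.

Lemma lyapunov_ge0 s : 0 <= lyapunov s.
Proof. by rewrite lee_fin addr_ge0 ?sqnorm_ge0. Qed.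

Lemma lyapunov_Eiid0 : Eiid P 1 lyapunov = (sqnorm (x0 - xs))%:E.
Proof. by rewrite /= /lyapunov /= subrr sqnorm0 addr0 integral_cst_probability. Qed.

Lemma lyapunov_Eiid_step k :
  Eiid P k.+2 lyapunov
  <= rho%:E * Eiid P k.+1 lyapunov + (12 * om ^+ 2 * sigma2)%:E.
Proof.
case: k => [|k]; first exact: (lyapunov_two_samples_le x0 (measurable_rV_cst x0)).
rewrite -addn2 -[in leRHS]addn1 !EiidD.
apply: le_Eiid_affine => [||s|s|].
- exact: rho_ge0.
- by rewrite mulr_ge0 ?sigma2_ge0 // mulr_ge0 // sqr_ge0.
- by apply: Eiid_ge0 => t; exact: lyapunov_ge0.
- by apply: Eiid_ge0 => t; exact: lyapunov_ge0.
(* The first [k.+1] samples determine [(x_k, xh_{k-1}, v_{k-1})]. *)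
case=> [|v l] // _.
have lyapunov_cat t : lyapunov (v :: l ++ t) =
    let: (x, xh, vp) := speg_state F w om om x0 x0 v l in
    let p := speg_run F w om om x xh vp t in
    (sqnorm (p.1 - xs) + sqnorm (p.1 - p.2))%:E.
  by rewrite /lyapunov /= speg_run_cat; case: speg_state => [[]].
rewrite /= in lyapunov_cat.
under [X in X <= _]eq_integral do under eq_integral do rewrite lyapunov_cat.
under [X in _ <= _ * X + _]eq_integral do rewrite lyapunov_cat.
case: speg_state => [[x xh] vp] /=.
by apply: lyapunov_two_samples_le; auto.
Qed.

Lemma lyapunov_Eiid_le k :
  Eiid P k.+1 lyapunov <= (rho ^+ k)%:E * Eiid P 1 lyapunov
                          + (24 * om * sigma2 / mu)%:E.
Proof.
have C_ge0 : (0 <= 24 * om * sigma2 / mu)%R.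
  by rewrite divr_ge0 ?mulr_ge0 ?sigma2_ge0 ?ltW.
elim: k => [|k IH]; first by rewrite expr0 mul1e leeDl.
rewrite lyapunov_Eiid0 in IH *.
apply: le_trans (lyapunov_Eiid_step k) _.
apply: le_trans (leeD2r _ (lee_wpmul2l _ IH)) _; first by rewrite lee_fin rho_ge0.
rewrite -!EFinM -!EFinD lee_fin [(rho ^+ _.+1)%R]exprS /rho le_eqVlt.
by apply/predU1l; field; exact: lt0r_neq0.
Qed.

End SPEGLyapunov.

Lemma SPEG_dist2_le_R2 (R : realType) (n d : nat) (dV : measure_display)
    (V : measurableType dV) (P : probability V R) (w : V -> 'I_n -> R)
    (F : 'I_n -> 'rV[R]_d -> 'rV[R]_d) (ga om : R) (x0 xs : 'rV[R]_d) k :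
  (SPEG_dist2 P F w ga om x0 xs k <= SPEG_R2 P F w ga om x0 xs k)%E.
Proof.
apply: (@le_trans _ _ (1%:E * SPEG_R2 P F w ga om x0 xs k + 0%:E)%E).
  apply: le_Eiid_affine => // s; rewrite /= ?lee_fin ?addr_ge0 ?sqnorm_ge0 //.
  by rewrite mul1r addr0 lerDl sqnorm_ge0.
by rewrite mul1e adde0.
Qed.

Lemma geometric_tail_le (R : realType) (t M r0 eps : R) (K : nat) :
  0 < t -> t <= 1 -> 1 <= t * M -> 0 < r0 -> 0 < eps ->
  M * ln (2 * r0 / eps) <= K%:R -> (1 - t) ^+ K * r0 <= eps / 2.
Proof.
move=> t_gt0 t_le1 tM r0_gt0 eps_gt0 MK; set z := 2 * r0 / eps.
have z_gt0 : 0 < z by rewrite divr_gt0 // mulr_gt0.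
have [z_le1|z_gt1] := leP z 1.
  apply: (@le_trans _ _ r0).
    by rewrite ler_piMl ?(ltW r0_gt0) // exprn_ile1 //; lra.
  by move: z_le1; rewrite ler_pdivrMr // mul1r; lra.
have lnz_gt0 : 0 < ln z by exact: ln_gt0.
have geom_le_exp : (1 - t) ^+ K <= expR (K%:R * - t).
  rewrite expRM_natl; apply: lerXn2r; rewrite ?nnegrE ?expR_ge0 //; first lra.
  by have := expR_ge1Dx (- t); lra.
have lnz_le : ln z <= t * K%:R.
  apply: (@le_trans _ _ (t * (M * ln z))); last by rewrite ler_wpM2l // ltW.
  by rewrite mulrA ler_peMl // ltW.
have exp_le : expR (K%:R * - t) <= z^-1.
  by rewrite -[X in _ <= X^-1](lnK z_gt0) -expRN ler_expR; lra.
apply: (@le_trans _ _ (z^-1 * r0)).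
  by rewrite ler_wpM2r ?(ltW r0_gt0) // (le_trans geom_le_exp exp_le).
by rewrite /z invf_div le_eqVlt; apply/predU1l; field; exact: lt0r_neq0.
Qed.

Section StepSize.
Context (R : realType) (L mu delta sigma2 eps : R).
Hypotheses (L_gt0 : 0 < L) (mu_gt0 : 0 < mu) (delta_gt0 : 0 < delta)
  (sigma2_ge0 : 0 <= sigma2) (eps_gt0 : 0 < eps).

Lemma step_size_bounds (om : R) : 0 < om -> mu <= L ->
  om <= Num.min (mu / (18 * delta)) (1 / (4 * L)) ->
  [/\ om * delta <= mu / 18, om * L <= 1 / 4 & om * mu <= 1 / 4].
Proof.
move=> om_gt0 mu_le_L; rewrite le_min !ler_pdivlMr ?mulr_gt0 // => /andP[om_d om_L].
have om_mu : om * mu <= om * L by rewrite ler_wpM2l // ltW.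
by split; lra.
Qed.

(* The case split avoids the junk value [x / 0 = 0] when [sigma2 = 0]. *)
Definition eps_step_size :=
  if sigma2 == 0 then Num.min (mu / (18 * delta)) (1 / (4 * L))
  else Num.min (Num.min (mu / (18 * delta)) (1 / (4 * L)))
               (eps * mu / (48 * sigma2)).

Let M := Num.max (Num.max (8 * L / mu) (36 * delta / mu ^+ 2))
                 (96 * sigma2 / (eps * mu ^+ 2)).

Lemma eps_step_size_gt0 : 0 < eps_step_size.
Proof.
rewrite /eps_step_size; case: eqP => [|/eqP s_neq0];
  rewrite !lt_min !divr_gt0 ?mulr_gt0 //.
by rewrite lt_def s_neq0.
Qed.

Lemma eps_step_size_le : eps_step_size <= Num.min (mu / (18 * delta)) (1 / (4 * L)).
Proof.
by rewrite /eps_step_size; case: eqP => _; [exact: lexx | rewrite ge_min lexx].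
Qed.

Lemma eps_step_size_noise : 24 * eps_step_size * sigma2 / mu <= eps / 2.
Proof.
rewrite /eps_step_size; case: eqP => [->|/eqP s_neq0].
  by rewrite mulr0 mul0r divr_ge0 // ltW.
have s_gt0 : 0 < sigma2 by rewrite lt_def s_neq0.
set om := Num.min _ _.
have : om <= eps * mu / (48 * sigma2) by rewrite ge_min lexx orbT.
by rewrite ler_pdivrMr // ler_pdivlMr ?mulr_gt0 //; lra.
Qed.

Lemma eps_step_size_rate : 1 <= eps_step_size * mu / 2 * M.
Proof.
have rate_ge1 a Ma : 0 < a -> (a * (mu / 2))^-1 = Ma -> Ma <= M ->
    1 <= a * (mu / 2 * M).
  move=> a_gt0 aMa MaM; have c_gt0 : 0 < a * (mu / 2) by rewrite !mulr_gt0.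
  by rewrite mulrA -[leLHS](mulfV (lt0r_neq0 c_gt0)) ler_wpM2l ?(ltW c_gt0) // aMa.
have rate1 : 1 <= mu / (18 * delta) * (mu / 2 * M).
  apply: (rate_ge1 _ (36 * delta / mu ^+ 2)); rewrite ?divr_gt0 ?mulr_gt0 //.
    by field; rewrite !lt0r_neq0.
  by rewrite /M !le_max lexx !(orbT, orTb).
have rate2 : 1 <= 1 / (4 * L) * (mu / 2 * M).
  apply: (rate_ge1 _ (8 * L / mu)); rewrite ?divr_gt0 ?mulr_gt0 //.
    by field; rewrite !lt0r_neq0.
  by rewrite /M !le_max lexx !(orbT, orTb).
have M_ge0 : 0 <= mu / 2 * M.
  have M8 : 8 * L / mu <= M by rewrite /M !le_max lexx !(orbT, orTb).
  apply: mulr_ge0; first by rewrite divr_ge0 // ltW.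
  by apply: le_trans M8; rewrite divr_ge0 ?mulr_ge0 ?(ltW L_gt0) ?(ltW mu_gt0).
rewrite -(mulrA _ mu) -mulrA /eps_step_size; case: eqP => [_|/eqP s_neq0].
  by rewrite minr_pMl // le_min rate1 rate2.
have s_gt0 : 0 < sigma2 by rewrite lt_def s_neq0.
have rate3 : 1 <= eps * mu / (48 * sigma2) * (mu / 2 * M).
  apply: (rate_ge1 _ (96 * sigma2 / (eps * mu ^+ 2)));
    rewrite ?divr_gt0 ?mulr_gt0 //.
    by field; rewrite !lt0r_neq0 ?mulr_gt0.
  by rewrite /M !le_max lexx !(orbT, orTb).
by rewrite !minr_pMl // !le_min rate1 rate2 rate3.
Qed.

End StepSize.

Section SPEGRate.
Context (R : realType) (n d : nat) (dV : measure_display) (V : measurableType dV)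
  (D : probability V R) (w : V -> 'I_n -> R) (F : 'I_n -> 'rV[R]_d -> 'rV[R]_d)
  (xs x0 : 'rV[R]_d) (L mu delta sigma2 : R).
Hypotheses (w_meas : forall i, measurable_fun setT (fun s => w s i))
  (w_ge0 : forall s i, 0 <= w s i)
  (w_mean : forall i, (\int[D]_s (w s i)%:E = 1)%E)
  (Fxs : Fbar F xs = 0) (L_gt0 : 0 < L)
  (F_lipschitz : forall x y, enorm (Fbar F x - Fbar F y) <= L * enorm (x - y))
  (mu_gt0 : 0 < mu)
  (F_qsm : forall x, mu * sqnorm (x - xs) <= dotv (Fbar F x) (x - xs))
  (delta_gt0 : 0 < delta)
  (residual : forall x, (\int[D]_s (sqnorm ((Fv F w s x - Fv F w s xs)
                                   - (Fbar F x - Fbar F xs)))%:E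
                         <= (delta / 2 * sqnorm (x - xs))%:E)%E)
  (sigma2E : (\int[D]_s (sqnorm (Fv F w s xs))%:E = sigma2%:E)%E).

Lemma SPEG_R2_le (om : R) : 0 < om ->
  om <= Num.min (mu / (18 * delta)) (1 / (4 * L)) -> forall k : nat,
  (SPEG_R2 D F w om om x0 xs k
   <= ((1 - om * mu / 2) ^+ k)%:E * SPEG_R2 D F w om om x0 xs 0
      + (24 * om * sigma2 / mu)%:E)%E.
Proof.
(* [mu <= L], hence [om * mu <= 1 / 4], only follows in positive dimension. *)
move=> om_gt0 om_le k; have [d0|d_gt0] := posnP d.
  subst d; have sqnorm_dim0 (x : 'rV[R]_0) : sqnorm x = 0.
    by rewrite /sqnorm big_ord0.
  have Eiid0 m : Eiid D m (fun s => let p := speg_iter F w om om x0 s in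
                    (sqnorm (p.1 - xs) + sqnorm (p.1 - p.2))%:E) = 0%E.
    rewrite -(Eiid_cst D m 0%E); apply: eq_Eiid => s /=.
    by rewrite !sqnorm_dim0 addr0.
  rewrite /SPEG_R2 !Eiid0 mule0 add0e lee_fin.
  by rewrite divr_ge0 ?mulr_ge0 ?(sigma2_ge0 sigma2E) ?ltW.
have mu_le_L := quasi_strongly_monotone_le_lipschitz d_gt0 Fxs F_lipschitz F_qsm.
have [om_delta om_L om_mu] := step_size_bounds L_gt0 delta_gt0 om_gt0 mu_le_L om_le.
exact: (lyapunov_Eiid_le x0 w_meas w_ge0 w_mean Fxs residual sigma2E mu_gt0 L_gt0
  (ltW delta_gt0) F_lipschitz F_qsm om_gt0 om_delta om_L om_mu k).
Qed.

Lemma SPEG_dist2_le_eps (eps : R) : 0 < eps -> forall K : nat,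
  let om := eps_step_size L mu delta sigma2 eps in
  Num.max (Num.max (8 * L / mu) (36 * delta / mu ^+ 2))
          (96 * sigma2 / (eps * mu ^+ 2))
    * ln (2 * fine (SPEG_R2 D F w om om x0 xs 0) / eps) <= K%:R ->
  (SPEG_dist2 D F w om om x0 xs K <= eps%:E)%E.
Proof.
move=> eps_gt0 K om MK.
have sigma2_ge0 : 0 <= sigma2 by exact: sigma2_ge0 sigma2E.
have om_gt0 : 0 < om by exact: eps_step_size_gt0.
have om_le := eps_step_size_le L mu delta sigma2 eps.
have R2_0 : SPEG_R2 D F w om om x0 xs 0 = (sqnorm (x0 - xs))%:E.
  exact: lyapunov_Eiid0.
apply: le_trans (SPEG_dist2_le_R2 _ _ _ _ _ _ _ _) _.
apply: le_trans (SPEG_R2_le om_gt0 om_le K) _.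
rewrite R2_0 -EFinM -EFinD lee_fin.
have noise_le : 24 * om * sigma2 / mu <= eps / 2 by exact: eps_step_size_noise.
suff : (1 - om * mu / 2) ^+ K * sqnorm (x0 - xs) <= eps / 2 by lra.
have [r0_eq0|r0_neq0] := eqVneq (sqnorm (x0 - xs)) 0.
  by rewrite r0_eq0 mulr0 divr_ge0 // ltW.
have r0_gt0 : 0 < sqnorm (x0 - xs) by rewrite lt_def r0_neq0 sqnorm_ge0.
have d_gt0 : (0 < d)%N.
  by case: posnP => // d0; subst d; move: r0_gt0; rewrite /sqnorm big_ord0 ltxx.
have mu_le_L := quasi_strongly_monotone_le_lipschitz d_gt0 Fxs F_lipschitz F_qsm.
have [_ _ om_mu] := step_size_bounds L_gt0 delta_gt0 om_gt0 mu_le_L om_le.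
rewrite R2_0 /= in MK.
apply: geometric_tail_le MK => //; first by rewrite divr_gt0 ?mulr_gt0.
- lra.
- exact: eps_step_size_rate.
Qed.

End SPEGRate.

Theorem theorem4p1 (R : realType) (n d : nat)
  (dV : measure_display) (V : measurableType dV)
  (D : probability V R) (w : V -> 'I_n -> R)
  (F : 'I_n -> 'rV[R]_d -> 'rV[R]_d) (xs x0 : 'rV[R]_d)
  (L mu delta sigma2 : R) :
  (0 < n)%N ->
  (* D is a sampling distribution: v = w s in R^n_+ with E[v_i] = 1 *)
  (forall i, measurable_fun setT (fun s => w s i)) ->
  (forall s i, 0 <= w s i) ->
  (forall i, (\int[D]_s (w s i)%:E = 1)%E) ->
  (* each F_i is (Borel) measurable on R^d *)
  (forall i j, measurable_fun setT
     (fun t : d.-tuple R => F i (\row_(k < d) tnth t k) 0 j)) ->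
  Fbar F xs = 0 ->
  0 < L ->
  (forall x y, enorm (Fbar F x - Fbar F y) <= L * enorm (x - y)) ->
  0 < mu ->
  (forall x, mu * sqnorm (x - xs) <= dotv (Fbar F x) (x - xs)) ->
  0 < delta ->
  (forall x, (\int[D]_s (sqnorm ((Fv F w s x - Fv F w s xs)
                                 - (Fbar F x - Fbar F xs)))%:E
              <= (delta / 2 * sqnorm (x - xs))%:E)%E) ->
  (\int[D]_s (sqnorm (Fv F w s xs))%:E = sigma2%:E)%E ->
  (forall omega, 0 < omega ->
     omega <= Num.min (mu / (18 * delta)) (1 / (4 * L)) ->
     forall k : nat,
       (SPEG_R2 D F w omega omega x0 xs k
        <= ((1 - omega * mu / 2) ^+ k)%:E * SPEG_R2 D F w omega omega x0 xs 0
           + (24 * omega * sigma2 / mu)%:E)%E)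
  /\
  (forall eps, 0 < eps ->
     let omega :=
       if sigma2 == 0 then Num.min (mu / (18 * delta)) (1 / (4 * L))
       else Num.min (Num.min (mu / (18 * delta)) (1 / (4 * L)))
                    (eps * mu / (48 * sigma2)) in
     forall K : nat,
       Num.max (Num.max (8 * L / mu) (36 * delta / mu ^+ 2))
               (96 * sigma2 / (eps * mu ^+ 2))
         * ln (2 * fine (SPEG_R2 D F w omega omega x0 xs 0) / eps) <= K%:R ->
       (SPEG_dist2 D F w omega omega x0 xs K <= eps%:E)%E).
Proof.
move=> _ w_meas w_ge0 w_mean _ Fxs L_gt0 F_lipschitz mu_gt0 F_qsm delta_gt0
  residual sigma2E.
split; first exact: SPEG_R2_le.
by move=> eps eps_gt0; exact: SPEG_dist2_le_eps.
Qed.
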